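(* Let $f:\mathbb N\to\mathbb N$ be defined by $f(n)=\lfloor\varphi n\rfloor+1$ if $n\in R_{0,0}$ and $f(n)=\lfloor(\varphi-1)n\rfloor$ if $n\in R_{1,0}$, and let $\tau:\mathbb N\to\mathbb N$ be defined by $\tau(n)=\lfloor\varphi n+1\rfloor$ if $n\in R_{2,0}$, $\tau(n)=\lfloor\varphi n-1\rfloor$ if $n\in R_{1,0}$, and $\tau(n)=\lfloor(\varphi-1)n+1\rfloor$ if $n\in R_{1,1}$. Both are permutations of $\mathbb N$, and $$f\circ\tau=\tau^{-1}\circ f.$$
   Context: $\mathbb N=\{1,2,\dots\}$, $\varphi=\frac{1+\sqrt5}{2}$, $F$ the Fibonacci numbers ($F(0)=0,F(1)=F(2)=1$). For $i\in\mathbb Z^{\ge0},j\in\mathbb Z$, $R_{i,j}$ is the range of $n\mapsto F(i+1)\lfloor n\varphi\rfloor+F(i)n-j$, $n\in\mathbb N$; $R_{0,0},R_{1,0}$ partition $\mathbb N$, as do $R_{2,0},R_{1,0},R_{1,1}$. *)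

From Stdlib Require Import Reals Lra Lia ZArith Arith ClassicalEpsilon.
Open Scope R_scope.

Definition phi : R := (1 + sqrt 5) / 2.

(* floor : R -> Z  (Int_part r = up r - 1 is the floor of r) *)
Definition floorR (x : R) : Z := Int_part x.

Fixpoint fib (n : nat) : nat :=
  match n with
  | O => 0%nat
  | S p => match p with O => 1%nat | S q => (fib p + fib q)%nat end
  end.

(* m \in R_{i,j}: m is a value of n |-> F(i+1) floor(n phi) + F(i) n - j, n >= 1 *)
Definition inR (i : nat) (j : Z) (m : nat) : Prop :=
  exists n : nat, (1 <= n)%nat /\
    Z.of_nat m = (Z.of_nat (fib (i + 1)) * floorR (INR n * phi)
                  + Z.of_nat (fib i) * Z.of_nat n - j)%Z.

Definition ifP {A : Type} (P : Prop) (a b : A) : A :=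
  if excluded_middle_informative P then a else b.

Definition f_map (n : nat) : nat :=
  ifP (inR 0 0 n) (Z.to_nat (floorR (phi * INR n)) + 1)%nat
                  (Z.to_nat (floorR ((phi - 1) * INR n))).

Definition tau_map (n : nat) : nat :=
  ifP (inR 2 0 n) (Z.to_nat (floorR (phi * INR n + 1)))
    (ifP (inR 1 0 n) (Z.to_nat (floorR (phi * INR n - 1)))
                     (Z.to_nat (floorR ((phi - 1) * INR n + 1)))).

Definition perm_N (p : nat -> nat) : Prop :=
  (forall n, (1 <= n)%nat -> (1 <= p n)%nat) /\
  (forall m n, (1 <= m)%nat -> (1 <= n)%nat -> p m = p n -> m = n) /\
  (forall m, (1 <= m)%nat -> exists n, (1 <= n)%nat /\ p n = m).

(* Write A(n) = ⌊nφ⌋ and B(n) = A(n) + n = ⌊nφ²⌋ (the lower and upper Wythoff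
   sequences); then R_{0,0} = A(ℕ), R_{1,0} = B(ℕ), R_{2,0} = A(B(ℕ)), and
   R_{1,1} = A(A(ℕ)) because A(A(n)) = B(n) - 1.  As φ is irrational, A(n) = m iff
   n ∈ (m/φ, (m+1)/φ) and B(n) = m iff n ∈ (m/φ², (m+1)/φ²); since
   1/φ + 1/φ² = 1 these two intervals contain exactly one integer between them, so A
   and B partition ℕ.  On this partition f swaps A(n) and B(n), while τ sends
   A(A(n)) ↦ A(n), A(B(n)) ↦ B(B(n)) and B(n) ↦ B(A(n)); the three cases give
   τ ∘ f ∘ τ = f.  So f is an involution, τ has inverse f ∘ τ ∘ f, and
   f ∘ τ = τ⁻¹ ∘ f. *)

From Stdlib Require Import Reals ZArith Lra Lia Psatz ClassicalEpsilon.
Open Scope R_scope.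

Lemma sqrt5_sq : sqrt 5 * sqrt 5 = 5.
Proof. apply sqrt_sqrt; lra. Qed.

Lemma phi_sq : phi * phi = phi + 1.
Proof. unfold phi. pose proof sqrt5_sq. nra. Qed.

Lemma phi_bounds : 3/2 < phi < 2.
Proof. unfold phi. pose proof sqrt5_sq. pose proof (sqrt_pos 5). split; nra. Qed.

Lemma phi_mul_pred : phi * (phi - 1) = 1.
Proof. pose proof phi_sq. lra. Qed.

Lemma five_dvd_of_square (M : Z) : (5 | M * M)%Z -> (5 | M)%Z.
Proof.
  intros Hdvd. apply Z.mod_divide in Hdvd; [|lia]. apply Z.mod_divide; [lia|].
  rewrite Z.mul_mod in Hdvd by lia.
  assert (Hr : (0 <= M mod 5 < 5)%Z) by (apply Z.mod_pos_bound; lia).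
  assert (Hcases : (M mod 5 = 0 \/ M mod 5 = 1 \/ M mod 5 = 2 \/ M mod 5 = 3 \/ M mod 5 = 4)%Z)
    by lia.
  destruct Hcases as [E|[E|[E|[E|E]]]]; rewrite E in *; cbn in Hdvd; lia.
Qed.

Lemma five_mul_square_ne_square (N M : Z) : (0 < N)%Z -> (5 * N * N <> M * M)%Z.
Proof.
  revert M. induction N as [N IH] using (well_founded_induction (Z.lt_wf 0)).
  intros M HN E.
  destruct (five_dvd_of_square M) as [q ->]; [exists (N * N)%Z; lia|].
  destruct (five_dvd_of_square N) as [p ->]; [exists (q * q)%Z; lia|].
  apply (IH p) with q; lia.
Qed.

Lemma nat_mul_phi_ne_IZR (n : nat) (z : Z) : (1 <= n)%nat -> INR n * phi <> IZR z.
Proof.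
  intros Hn E.
  apply (five_mul_square_ne_square (Z.of_nat n) (2 * z - Z.of_nat n)); [lia|].
  apply eq_IZR. rewrite !mult_IZR, minus_IZR, mult_IZR, <- INR_IZR_INZ.
  assert (Hs : INR n * sqrt 5 = 2 * IZR z - INR n) by (unfold phi in E; lra).
  pose proof sqrt5_sq. simpl (IZR 2); simpl (IZR 5). nra.
Qed.

Lemma floor_bounds (x : R) : IZR (floorR x) <= x < IZR (floorR x) + 1.
Proof. unfold floorR. pose proof (base_Int_part x). lra. Qed.

Lemma floor_unique (x : R) (z : Z) : IZR z <= x < IZR z + 1 -> floorR x = z.
Proof. intros Hz. symmetry. apply Int_part_spec. lra. Qed.

Lemma floor_add_IZR (x : R) (k : Z) : floorR (x + IZR k) = (floorR x + k)%Z.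
Proof. apply floor_unique. rewrite plus_IZR. pose proof (floor_bounds x). lra. Qed.

Lemma floor_nonneg (x : R) : 0 <= x -> (0 <= floorR x)%Z.
Proof.
  intros Hx. pose proof (floor_bounds x).
  assert (Hgt : (-1 < floorR x)%Z) by (apply lt_IZR; simpl; lra). lia.
Qed.

Lemma nat_floor_exists (x : R) : 0 <= x -> exists n : nat, INR n <= x < INR n + 1.
Proof.
  intros Hx. exists (Z.to_nat (floorR x)).
  rewrite INR_IZR_INZ, Z2Nat.id by (apply floor_nonneg, Hx). apply floor_bounds.
Qed.

Lemma lt_mul_between_iff (x a b c d : R) :
  0 < c -> c * d = 1 -> (a < x * c < b <-> a * d < x < b * d).
Proof.
  intros Hc Hcd. assert (Hd : 0 < d) by nra.
  assert (Hcancel : forall y, y * c * d = y /\ y * d * c = y).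
  { intros y. split; [rewrite Rmult_assoc, Hcd | rewrite Rmult_assoc, (Rmult_comm d), Hcd]; ring. }
  destruct (Hcancel x) as [Ex Ex'], (Hcancel a) as [Ea Ea'], (Hcancel b) as [Eb Eb'].
  split; intros [H1 H2]; split.
  - apply (Rmult_lt_compat_r d) in H1; lra.
  - apply (Rmult_lt_compat_r d) in H2; lra.
  - apply (Rmult_lt_compat_r c) in H1; lra.
  - apply (Rmult_lt_compat_r c) in H2; lra.
Qed.

Lemma floor_mul_eq_iff (x c d : R) (z : Z) :
  0 < c -> c * d = 1 -> x * c <> IZR z ->
  floorR (x * c) = z <-> IZR z * d < x < (IZR z + 1) * d.
Proof.
  intros Hc Hcd Hz. rewrite <- (lt_mul_between_iff x _ _ c d Hc Hcd). split.
  - intros <-. pose proof (floor_bounds (x * c)). lra.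
  - intros Hb. apply floor_unique. lra.
Qed.

Lemma nat_not_strictly_between (a b : nat) : ~ (INR a < INR b < INR a + 1).
Proof.
  intros [H1 H2]. apply INR_lt in H1. rewrite <- S_INR in H2. apply INR_lt in H2. lia.
Qed.

Definition lower_wythoff (n : nat) : nat := Z.to_nat (floorR (INR n * phi)).
Definition upper_wythoff (n : nat) : nat := (lower_wythoff n + n)%nat.

Lemma lower_wythoff_Z (n : nat) : Z.of_nat (lower_wythoff n) = floorR (INR n * phi).
Proof.
  unfold lower_wythoff. rewrite Z2Nat.id; [reflexivity|].
  apply floor_nonneg. pose proof (pos_INR n). pose proof phi_bounds. nra.
Qed.

Lemma upper_wythoff_Z (n : nat) : Z.of_nat (upper_wythoff n) = floorR (INR n * (phi * phi)).
Proof.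
  unfold upper_wythoff. rewrite Nat2Z.inj_add, lower_wythoff_Z, <- floor_add_IZR, <- INR_IZR_INZ.
  f_equal. rewrite phi_sq. ring.
Qed.

Lemma lower_wythoff_bounds (n : nat) : (1 <= n)%nat ->
  INR (lower_wythoff n) < INR n * phi < INR (lower_wythoff n) + 1.
Proof.
  intros Hn. rewrite INR_IZR_INZ, lower_wythoff_Z.
  pose proof (floor_bounds (INR n * phi)). pose proof (nat_mul_phi_ne_IZR n (floorR (INR n * phi)) Hn).
  lra.
Qed.

Lemma lower_wythoff_eq_iff (n m : nat) : (1 <= n)%nat ->
  lower_wythoff n = m <-> INR m * (phi - 1) < INR n < (INR m + 1) * (phi - 1).
Proof.
  intros Hn. pose proof phi_bounds.
  rewrite <- Nat2Z.inj_iff, lower_wythoff_Z, (INR_IZR_INZ m).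
  apply floor_mul_eq_iff; [lra | exact phi_mul_pred | exact (nat_mul_phi_ne_IZR n _ Hn)].
Qed.

Lemma upper_wythoff_eq_iff (n m : nat) : (1 <= n)%nat ->
  upper_wythoff n = m <-> INR m * (2 - phi) < INR n < (INR m + 1) * (2 - phi).
Proof.
  intros Hn. pose proof phi_bounds. pose proof phi_sq.
  rewrite <- Nat2Z.inj_iff, upper_wythoff_Z, (INR_IZR_INZ m).
  apply floor_mul_eq_iff; [nra | nra |].
  intros E. apply (nat_mul_phi_ne_IZR n (Z.of_nat m - Z.of_nat n) Hn).
  rewrite minus_IZR, <- E, <- INR_IZR_INZ, phi_sq. ring.
Qed.

Lemma lower_wythoff_ge (n : nat) : (n <= lower_wythoff n)%nat.
Proof.
  apply Nat.lt_succ_r, INR_lt. rewrite S_INR, (INR_IZR_INZ (lower_wythoff n)), lower_wythoff_Z.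
  pose proof (floor_bounds (INR n * phi)). pose proof (pos_INR n). pose proof phi_bounds.
  nra.
Qed.

Lemma lower_wythoff_pos (n : nat) : (1 <= n)%nat -> (1 <= lower_wythoff n)%nat.
Proof. pose proof (lower_wythoff_ge n). lia. Qed.

Lemma upper_wythoff_pos (n : nat) : (1 <= n)%nat -> (1 <= upper_wythoff n)%nat.
Proof. unfold upper_wythoff. lia. Qed.

Lemma lower_wythoff_inj (n k : nat) : (1 <= n)%nat -> (1 <= k)%nat ->
  lower_wythoff n = lower_wythoff k -> n = k.
Proof.
  intros Hn Hk E. pose proof phi_bounds.
  apply (lower_wythoff_eq_iff n _ Hn) in E.
  pose proof (proj1 (lower_wythoff_eq_iff k _ Hk) eq_refl).
  destruct (Nat.lt_total n k) as [Hlt|[Heq|Hlt]]; trivial;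
    apply le_INR in Hlt; rewrite S_INR in Hlt; lra.
Qed.

Lemma lower_wythoff_neq_upper (n k : nat) : (1 <= n)%nat -> (1 <= k)%nat ->
  lower_wythoff n <> upper_wythoff k.
Proof.
  intros Hn Hk E.
  apply (lower_wythoff_eq_iff n _ Hn) in E.
  pose proof (proj1 (upper_wythoff_eq_iff k _ Hk) eq_refl).
  apply (nat_not_strictly_between (upper_wythoff k) (n + k)). rewrite plus_INR. lra.
Qed.

Lemma nat_mul_phi_pred_ne_INR (n m : nat) : (1 <= n)%nat -> INR n * (phi - 1) <> INR m.
Proof.
  intros Hn E. apply (nat_mul_phi_ne_IZR n (Z.of_nat (m + n)) Hn).
  rewrite <- INR_IZR_INZ, plus_INR, <- E. ring.
Qed.

Lemma lower_or_upper_wythoff (m : nat) : (1 <= m)%nat ->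
  exists n, (1 <= n)%nat /\ (m = lower_wythoff n \/ m = upper_wythoff n).
Proof.
  intros Hm. pose proof phi_bounds.
  assert (Hm1 : 1 <= INR m) by (apply (le_INR 1); exact Hm).
  destruct (nat_floor_exists ((INR m + 1) * (phi - 1))) as [n Hfl]; [nra|].
  pose proof (nat_mul_phi_pred_ne_INR (S m) n ltac:(lia)) as Hne1. rewrite S_INR in Hne1.
  pose proof (nat_mul_phi_pred_ne_INR m n Hm) as Hne.
  destruct (Rlt_or_le (INR m * (phi - 1)) (INR n)) as [Hlt|Hle].
  - assert (Hn : (1 <= n)%nat) by (apply (INR_lt 0); simpl; nra).
    exists n. split; [exact Hn|]. left. symmetry. apply (lower_wythoff_eq_iff n m Hn). lra.
  - assert (Hnm : (n < m)%nat) by (apply INR_lt; nra).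
    assert (Hk : (1 <= m - n)%nat) by lia.
    exists (m - n)%nat. split; [exact Hk|]. right. symmetry.
    apply (upper_wythoff_eq_iff _ m Hk). rewrite minus_INR by lia. lra.
Qed.

Lemma lower_wythoff_lower (n : nat) : (1 <= n)%nat ->
  S (lower_wythoff (lower_wythoff n)) = upper_wythoff n.
Proof.
  intros Hn. pose proof phi_bounds. pose proof phi_mul_pred.
  pose proof (lower_wythoff_bounds n Hn) as Hb.
  apply (lt_mul_between_iff (INR n) _ _ phi (phi - 1)) in Hb; [|lra|assumption].
  assert (E : Z.of_nat (lower_wythoff (lower_wythoff n))
              = (Z.of_nat (lower_wythoff n) + Z.of_nat n - 1)%Z).
  { rewrite lower_wythoff_Z. apply floor_unique.
    rewrite minus_IZR, plus_IZR, <- !INR_IZR_INZ. lra. }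
  unfold upper_wythoff. lia.
Qed.

Lemma floor_phi_pred_mul_upper_wythoff (n : nat) : (1 <= n)%nat ->
  floorR ((phi - 1) * INR (upper_wythoff n)) = Z.of_nat (lower_wythoff n).
Proof.
  intros Hn. pose proof phi_bounds. pose proof phi_mul_pred.
  pose proof (lower_wythoff_bounds n Hn) as Hb.
  apply (lt_mul_between_iff (INR n) _ _ phi (phi - 1)) in Hb; [|lra|assumption].
  assert (Hup : INR (lower_wythoff n) < INR (upper_wythoff n) * (phi - 1)
                < INR (lower_wythoff n) + 1).
  { apply (lt_mul_between_iff _ _ _ (phi - 1) phi); [lra|lra|].
    unfold upper_wythoff. rewrite plus_INR. lra. }
  apply floor_unique. rewrite <- INR_IZR_INZ. lra.
Qed.

Lemma lower_wythoff_upper (n : nat) : (1 <= n)%nat ->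
  lower_wythoff (upper_wythoff n) = (lower_wythoff n + upper_wythoff n)%nat.
Proof.
  intros Hn. apply Nat2Z.inj.
  rewrite lower_wythoff_Z, Nat2Z.inj_add, <- floor_phi_pred_mul_upper_wythoff by exact Hn.
  rewrite <- floor_add_IZR, <- INR_IZR_INZ. f_equal. ring.
Qed.

Lemma inR_0_0 (m : nat) : inR 0 0 m <-> exists n, (1 <= n)%nat /\ m = lower_wythoff n.
Proof.
  unfold inR; cbn [fib Nat.add].
  split; intros [n [Hn E]]; exists n; split; trivial.
  - apply Nat2Z.inj. rewrite lower_wythoff_Z. lia.
  - rewrite E, lower_wythoff_Z. lia.
Qed.

Lemma inR_1_0 (m : nat) : inR 1 0 m <-> exists n, (1 <= n)%nat /\ m = upper_wythoff n.
Proof.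
  unfold inR, upper_wythoff; cbn [fib Nat.add].
  split; intros [n [Hn E]]; exists n; split; trivial.
  - apply Nat2Z.inj. rewrite Nat2Z.inj_add, lower_wythoff_Z. lia.
  - rewrite E, Nat2Z.inj_add, lower_wythoff_Z. lia.
Qed.

Lemma inR_2_0 (m : nat) :
  inR 2 0 m <-> exists n, (1 <= n)%nat /\ m = lower_wythoff (upper_wythoff n).
Proof.
  unfold inR; cbn [fib Nat.add].
  split; intros [n [Hn E]]; exists n; split; trivial.
  - apply Nat2Z.inj. rewrite lower_wythoff_upper by exact Hn.
    unfold upper_wythoff. rewrite !Nat2Z.inj_add, lower_wythoff_Z. lia.
  - rewrite E, lower_wythoff_upper by exact Hn.
    unfold upper_wythoff. rewrite !Nat2Z.inj_add, lower_wythoff_Z. lia.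
Qed.

Lemma ifP_pos {A : Type} (P : Prop) (a b : A) : P -> ifP P a b = a.
Proof. intros HP. unfold ifP. destruct (excluded_middle_informative P); tauto. Qed.

Lemma ifP_neg {A : Type} (P : Prop) (a b : A) : ~ P -> ifP P a b = b.
Proof. intros HP. unfold ifP. destruct (excluded_middle_informative P); tauto. Qed.

Lemma floor_phi_mul (n : nat) : floorR (phi * INR n) = Z.of_nat (lower_wythoff n).
Proof. rewrite Rmult_comm. symmetry. apply lower_wythoff_Z. Qed.

Lemma f_map_lower (n : nat) : (1 <= n)%nat -> f_map (lower_wythoff n) = upper_wythoff n.
Proof.
  intros Hn. unfold f_map. rewrite ifP_pos by (apply inR_0_0; eauto).
  rewrite floor_phi_mul, Nat2Z.id, Nat.add_1_r. apply lower_wythoff_lower, Hn.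
Qed.

Lemma f_map_upper (n : nat) : (1 <= n)%nat -> f_map (upper_wythoff n) = lower_wythoff n.
Proof.
  intros Hn. unfold f_map. rewrite ifP_neg.
  - rewrite floor_phi_pred_mul_upper_wythoff by exact Hn. apply Nat2Z.id.
  - rewrite inR_0_0. intros [k [Hk E]]. exact (lower_wythoff_neq_upper k n Hk Hn (eq_sym E)).
Qed.

Lemma tau_map_lower_upper (n : nat) : (1 <= n)%nat ->
  tau_map (lower_wythoff (upper_wythoff n)) = upper_wythoff (upper_wythoff n).
Proof.
  intros Hn. unfold tau_map. rewrite ifP_pos by (apply inR_2_0; eauto).
  change 1 with (IZR 1). rewrite floor_add_IZR, floor_phi_mul.
  rewrite <- (lower_wythoff_lower (upper_wythoff n)) by (apply upper_wythoff_pos, Hn).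
  lia.
Qed.

Lemma tau_map_upper (n : nat) : (1 <= n)%nat ->
  tau_map (upper_wythoff n) = upper_wythoff (lower_wythoff n).
Proof.
  intros Hn. unfold tau_map. rewrite ifP_neg, ifP_pos.
  - replace (phi * INR (upper_wythoff n) - 1) with (phi * INR (upper_wythoff n) + IZR (-1))
      by (simpl; ring).
    rewrite floor_add_IZR, floor_phi_mul, lower_wythoff_upper by exact Hn.
    pose proof (lower_wythoff_lower n Hn). unfold upper_wythoff in *. lia.
  - apply inR_1_0; eauto.
  - rewrite inR_2_0. intros [k [Hk E]].
    exact (lower_wythoff_neq_upper _ n (upper_wythoff_pos k Hk) Hn (eq_sym E)).
Qed.

Lemma tau_map_lower_lower (n : nat) : (1 <= n)%nat ->
  tau_map (lower_wythoff (lower_wythoff n)) = lower_wythoff n.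
Proof.
  intros Hn. pose proof (lower_wythoff_pos n Hn) as Hpos.
  set (m := lower_wythoff (lower_wythoff n)).
  assert (Hnot20 : ~ inR 2 0 m).
  { rewrite inR_2_0. intros [k [Hk E]].
    apply (lower_wythoff_inj _ _ Hpos (upper_wythoff_pos k Hk)) in E.
    exact (lower_wythoff_neq_upper n k Hn Hk E). }
  assert (Hnot10 : ~ inR 1 0 m).
  { rewrite inR_1_0. intros [k [Hk E]].
    exact (lower_wythoff_neq_upper _ k Hpos Hk E). }
  unfold tau_map. rewrite (ifP_neg _ _ _ Hnot20), (ifP_neg _ _ _ Hnot10).
  replace ((phi - 1) * INR m + 1) with (phi * INR m + IZR (1 - Z.of_nat m))
    by (rewrite minus_IZR, <- INR_IZR_INZ; simpl; ring).
  rewrite floor_add_IZR, floor_phi_mul.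
  pose proof (lower_wythoff_lower _ Hpos). pose proof (lower_wythoff_lower n Hn).
  unfold m, upper_wythoff in *. lia.
Qed.

Lemma wythoff_trichotomy (m : nat) : (1 <= m)%nat ->
  exists n, (1 <= n)%nat /\
    (m = lower_wythoff (lower_wythoff n) \/ m = lower_wythoff (upper_wythoff n)
     \/ m = upper_wythoff n).
Proof.
  intros Hm. destruct (lower_or_upper_wythoff m Hm) as [k [Hk [->| ->]]].
  - destruct (lower_or_upper_wythoff k Hk) as [n [Hn [->| ->]]]; exists n; auto.
  - exists k; auto.
Qed.

Lemma f_map_pos (n : nat) : (1 <= n)%nat -> (1 <= f_map n)%nat.
Proof.
  intros Hn. destruct (lower_or_upper_wythoff n Hn) as [k [Hk [->| ->]]].
  - rewrite f_map_lower by exact Hk. apply upper_wythoff_pos, Hk.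
  - rewrite f_map_upper by exact Hk. apply lower_wythoff_pos, Hk.
Qed.

Lemma f_map_involutive (n : nat) : (1 <= n)%nat -> f_map (f_map n) = n.
Proof.
  intros Hn. destruct (lower_or_upper_wythoff n Hn) as [k [Hk [->| ->]]].
  - rewrite f_map_lower, f_map_upper by exact Hk. reflexivity.
  - rewrite f_map_upper, f_map_lower by exact Hk. reflexivity.
Qed.

Lemma tau_map_pos (n : nat) : (1 <= n)%nat -> (1 <= tau_map n)%nat.
Proof.
  intros Hn. destruct (wythoff_trichotomy n Hn) as [k [Hk [->|[->| ->]]]].
  - rewrite tau_map_lower_lower by exact Hk. apply lower_wythoff_pos, Hk.
  - rewrite tau_map_lower_upper by exact Hk. apply upper_wythoff_pos, upper_wythoff_pos, Hk.
  - rewrite tau_map_upper by exact Hk. apply upper_wythoff_pos, lower_wythoff_pos, Hk.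
Qed.

Lemma tau_f_tau (n : nat) : (1 <= n)%nat -> tau_map (f_map (tau_map n)) = f_map n.
Proof.
  intros Hn. destruct (wythoff_trichotomy n Hn) as [k [Hk [->|[->| ->]]]].
  - pose proof (lower_wythoff_pos k Hk).
    rewrite tau_map_lower_lower, f_map_lower, tau_map_upper, f_map_lower by assumption.
    reflexivity.
  - pose proof (upper_wythoff_pos k Hk).
    rewrite tau_map_lower_upper, f_map_upper, tau_map_lower_upper, f_map_lower by assumption.
    reflexivity.
  - pose proof (lower_wythoff_pos k Hk).
    rewrite tau_map_upper, f_map_upper, tau_map_lower_lower, f_map_upper by assumption.
    reflexivity.
Qed.

Lemma perm_N_of_inverse (p q : nat -> nat) :
  (forall n, (1 <= n)%nat -> (1 <= p n)%nat) ->
  (forall n, (1 <= n)%nat -> (1 <= q n)%nat) ->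
  (forall n, (1 <= n)%nat -> q (p n) = n) ->
  (forall n, (1 <= n)%nat -> p (q n) = n) -> perm_N p.
Proof.
  intros Hp Hq Hqp Hpq. split; [exact Hp|split].
  - intros m n Hm Hn E. rewrite <- (Hqp m Hm), <- (Hqp n Hn), E. reflexivity.
  - intros m Hm. exists (q m). auto.
Qed.

Lemma perm_N_f_map : perm_N f_map.
Proof. apply perm_N_of_inverse with f_map; auto using f_map_pos, f_map_involutive. Qed.

Lemma perm_N_tau_map : perm_N tau_map.
Proof.
  apply perm_N_of_inverse with (fun n => f_map (tau_map (f_map n))).
  - exact tau_map_pos.
  - auto using f_map_pos, tau_map_pos.
  - intros n Hn. rewrite tau_f_tau by exact Hn. apply f_map_involutive, Hn.
  - intros n Hn. rewrite tau_f_tau by (apply f_map_pos, Hn). apply f_map_involutive, Hn.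
Qed.

Theorem theorem4p8 :
  perm_N f_map /\ perm_N tau_map /\
  (forall tau_inv : nat -> nat,
     (forall n, (1 <= n)%nat ->
        (1 <= tau_inv n)%nat /\ tau_map (tau_inv n) = n /\ tau_inv (tau_map n) = n) ->
     forall n, (1 <= n)%nat -> f_map (tau_map n) = tau_inv (f_map n)).
Proof.
  split; [exact perm_N_f_map | split; [exact perm_N_tau_map |]].
  intros tau_inv Htau_inv n Hn.
  rewrite <- (tau_f_tau n Hn).
  assert (Hpos : (1 <= f_map (tau_map n))%nat) by auto using f_map_pos, tau_map_pos.
  now destruct (Htau_inv _ Hpos) as (_ & _ & ->).
Qed.
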